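(* Let $(b_n)_{n\ge0}$ be the unique positive solution of the discrete Painlevé I equation $\frac{n}{b_n}=b_{n-1}+b_n+b_{n+1}-\kappa$ for $n\ge1$, with $b_0=0$. For all $c^-<1$ and $c^+>1$ there exists $N\in\mathbb{N}$ such that, for all $n\ge N$, $$c^-\frac{\sqrt n}{\sqrt3}\le b_n\le c^+\frac{\sqrt n}{\sqrt3}.$$ In particular, if $\kappa=4$, $c^-=0.987$ and $c^+=1.025$, this holds with $N=2187$.
   Context: Here $\kappa\in\mathbb{R}$ is fixed. Equivalently, $b_n=a_n^2$, where $(a_n)$ are the coefficients of the three-term recurrence $xp_n=a_{n+1}p_{n+1}+a_np_{n-1}$ (with $a_0=0$ and $a_n>0$) of the orthonormal polynomials $p_n$ with respect to $\nu(dx)\propto e^{-x^4/4+\kappa x^2/2}dx$. *)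

From Stdlib Require Import Reals Lra Lia.
Open Scope R_scope.

Definition dPI_positive_solution (kappa : R) (b : nat -> R) : Prop :=
  b 0%nat = 0 /\
  (forall n : nat, (1 <= n)%nat -> 0 < b n) /\
  (forall n : nat, (1 <= n)%nat ->
     INR n / b n = b (n - 1)%nat + b n + b (S n) - kappa).

From Stdlib Require Import Reals Lra Lia.
From Coquelicot Require Import Rcomplements.
Open Scope R_scope.

(** Write [b_n = f_n + e_n] for an approximation [f] with residual
    [r_n = f_(n-1) + f_n + f_(n+1) - kappa - n / f_n].  Subtracting from the
    equation gives [-e_n (1 + n / (b_n f_n)) = e_(n-1) + e_(n+1) + r_n].  The
    crude bound [b_n <= |kappa| + sqrt n], read off [n >= b_n (b_n - |kappa|)],
    makes [n / (b_n f_n) >= 3/2] for [f_n ~ sqrt (n/3)], so [|e_n|] satisfies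
    [5/2 y_(k+1) <= y_k + y_(k+2) + rho].  By a discrete maximum principle (the
    positive part of a subsolution grows geometrically, which the a priori linear
    bound forbids) [|e_n| <= 2 rho + |e_(N-1)| 2^-(n-N+1)].  With
    [f_n = sqrt (n/3)] the error stays bounded, which gives the asymptotics; for
    [kappa = 4] the expansion [f_n = v + 2/3 + 2/(9v)], [v = sqrt (n/3)], has
    residual below [2e-5] from [n = 1728] on, which gives the explicit constants. *)

Lemma pow_dominates_affine (r a c0 c1 : R) :
  1 < r -> 0 < a -> exists j : nat, c0 + c1 * INR j < a * r ^ j.
Proof.
  intros hr ha.
  pose proof (Rabs_pos c0). pose proof (Rabs_pos c1).
  pose proof (Rle_abs c0). pose proof (Rle_abs c1).
  assert (hx : 0 < a * ((r - 1) * (r - 1))) by (apply Rmult_lt_0_compat; nra).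
  destruct (INR_archimed _ (Rabs c0 + 2 * Rabs c1 + 1) hx) as [j hj].
  exists (j * 2)%nat. rewrite pow_mult, mult_INR.
  assert (hj1 : 1 <= INR j).
  { destruct j as [|j]; [simpl in hj; lra|]. rewrite S_INR. pose proof (pos_INR j). lra. }
  (* Bernoulli: r ^ j >= 1 + j (r - 1) *)
  assert (hbern : INR j * (r - 1) <= r ^ j)
    by (pose proof (poly j (r - 1) ltac:(lra));
        replace (1 + (r - 1)) with r in * by ring; lra).
  assert (hsq : (INR j * (r - 1)) ^ 2 <= (r ^ j) ^ 2) by (apply pow_incr; nra).
  assert (INR j * (Rabs c0 + 2 * Rabs c1 + 1) <= INR j * (INR j * (a * ((r - 1) * (r - 1)))))
    by (apply Rmult_le_compat_l; lra).
  assert (a * (INR j * (r - 1)) ^ 2 <= a * (r ^ j) ^ 2) by (apply Rmult_le_compat_l; lra).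
  assert (Rabs c0 <= INR j * Rabs c0) by nra.
  assert (c1 * INR j <= Rabs c1 * INR j) by (apply Rmult_le_compat_r; lra).
  simpl INR in *. nra.
Qed.

Lemma pow_le_one (x : R) (k : nat) : 0 <= x <= 1 -> x ^ k <= 1.
Proof. intro hx. rewrite <- (pow1 k). apply pow_incr. exact hx. Qed.

Lemma sqrt_le_1_plus (x : R) : 0 <= x -> sqrt x <= 1 + x.
Proof. intro hx. pose proof (sqrt_sqrt x hx). pose proof (sqrt_pos x). nra. Qed.

Lemma sub_bounds_of_sq_add_third (x y : R) :
  0 <= x -> 0 <= y -> y * y = x * x + 1 / 3 -> 0 <= y - x <= 1.
Proof. intros hx hy h. split; nra. Qed.

Lemma eventually_within_ratio (b f : nat -> R) (N0 : nat) (K cm cp : R) :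
  cm < 1 -> 1 < cp ->
  (forall n, (N0 <= n)%nat -> Rabs (b n - f n) <= K) ->
  (forall M, exists N, forall n, (N <= n)%nat -> M <= f n) ->
  exists N, forall n, (N <= n)%nat -> cm * f n <= b n /\ b n <= cp * f n.
Proof.
  intros hcm hcp hK hf.
  pose proof (Rmin_l (1 - cm) (cp - 1)). pose proof (Rmin_r (1 - cm) (cp - 1)).
  assert (hm : 0 < Rmin (1 - cm) (cp - 1)) by (apply Rmin_glb_lt; lra).
  set (m := Rmin (1 - cm) (cp - 1)) in *.
  destruct (hf (Rabs K / m)) as [N1 hN1].
  exists (Nat.max N0 N1). intros n hn.
  pose proof (hK n ltac:(lia)) as he. apply Rabs_le_between' in he.
  pose proof (hN1 n ltac:(lia)) as hfn.
  assert (hf0 : 0 <= f n) by (eapply Rle_trans; [|exact hfn]; apply Rdiv_le_0_compat;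
    [apply Rabs_pos | lra]).
  apply Rle_div_l in hfn; [|lra].
  pose proof (Rle_abs K).
  assert (f n * m <= f n * (1 - cm)) by (apply Rmult_le_compat_l; lra).
  assert (f n * m <= f n * (cp - 1)) by (apply Rmult_le_compat_l; lra).
  split; nra.
Qed.

(** * A discrete maximum principle *)

Lemma subsolution_nonpos (D c0 c1 : R) (z : nat -> R) :
  2 < D -> z 0%nat <= 0 ->
  (forall k, D * z (S k) <= z k + z (S (S k))) ->
  (forall k, z k <= c0 + c1 * INR k) ->
  forall k, z k <= 0.
Proof.
  intros hD hz0 hsub hgrowth.
  set (u k := Rmax 0 (z k)).
  assert (hu : forall k, 0 <= u k) by (intro k; apply Rmax_l).
  assert (hu0 : u 0%nat = 0) by (apply Rmax_left; exact hz0).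
  assert (hsubu : forall k, D * u (S k) <= u k + u (S (S k))).
  { intro k. pose proof (hu k). pose proof (hu (S (S k))).
    unfold u at 1. destruct (Rle_or_lt (z (S k)) 0) as [hle | hlt].
    - rewrite Rmax_left by exact hle. lra.
    - rewrite Rmax_right by lra. pose proof (hsub k).
      pose proof (Rmax_r 0 (z k)). pose proof (Rmax_r 0 (z (S (S k)))).
      unfold u in *. lra. }
  (* the positive part grows geometrically with ratio D - 1 > 1 *)
  assert (hratio : forall k, (D - 1) * u k <= u (S k)).
  { induction k as [|k IH]; [rewrite hu0; pose proof (hu 1%nat); lra|].
    pose proof (hsubu k). pose proof (hu k). nra. }
  assert (hgeom : forall m j, (D - 1) ^ j * u m <= u (m + j)%nat).
  { intros m j. induction j as [|j IH]; [rewrite Nat.add_0_r; simpl; lra|].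
    rewrite Nat.add_succ_r. pose proof (hratio (m + j)%nat).
    pose proof (pow_le (D - 1) j ltac:(lra)). simpl. nra. }
  intro m. apply Rnot_lt_le. intro hm.
  destruct (pow_dominates_affine (D - 1) (z m) (Rabs c0 + Rabs c1 * INR m) (Rabs c1))
    as [j hj]; [lra|exact hm|].
  pose proof (hgeom m j) as hmj.
  assert (hum : u m = z m) by (apply Rmax_right; lra).
  assert (hbound : u (m + j)%nat <= Rabs c0 + Rabs c1 * INR m + Rabs c1 * INR j).
  { unfold u. apply Rmax_lub.
    - pose proof (Rabs_pos c0). pose proof (Rabs_pos c1).
      pose proof (pos_INR m). pose proof (pos_INR j). nra.
    - pose proof (hgrowth (m + j)%nat). rewrite plus_INR in *.
      pose proof (Rle_abs c0). pose proof (Rle_abs c1).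
      pose proof (pos_INR m). pose proof (pos_INR j). nra. }
  rewrite hum in hmj. lra.
Qed.

Lemma subsolution_le_barrier (D theta rho B c0 c1 : R) (y : nat -> R) :
  2 < D -> 0 <= theta -> 1 + theta ^ 2 <= D * theta -> 0 <= rho -> 0 <= B ->
  y 0%nat <= B ->
  (forall k, D * y (S k) <= y k + y (S (S k)) + rho) ->
  (forall k, y k <= c0 + c1 * INR k) ->
  forall k, y k <= rho / (D - 2) + B * theta ^ k.
Proof.
  intros hD hth hDth hrho hB hy0 hsub hgrowth.
  set (g k := rho / (D - 2) + B * theta ^ k).
  assert (hg : forall k, 0 <= g k).
  { intro k. unfold g. pose proof (pow_le theta k hth).
    assert (0 <= rho / (D - 2)) by (apply Rdiv_le_0_compat; lra). nra. }
  (* theta ^ k is a supersolution of the homogeneous inequality since 1 + theta^2 <= D theta *)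
  assert (hsuper : forall k, g k + g (S (S k)) + rho <= D * g (S k)).
  { intro k. unfold g. simpl.
    assert (hrho' : rho / (D - 2) * (D - 2) = rho) by (field; lra).
    pose proof (pow_le theta k hth).
    assert (0 <= B * theta ^ k * (D * theta - 1 - theta ^ 2)) by
      (apply Rmult_le_pos; [apply Rmult_le_pos|]; lra).
    simpl in *. nra. }
  intro k. enough (y k - g k <= 0) by (unfold g in *; lra).
  apply (subsolution_nonpos D c0 c1 (fun k => y k - g k)); auto.
  - unfold g. simpl. assert (0 <= rho / (D - 2)) by (apply Rdiv_le_0_compat; lra). lra.
  - intro j. pose proof (hsub j). pose proof (hsuper j). lra.
  - intro j. pose proof (hgrowth j). pose proof (hg j). lra.
Qed.

(** * Stability of dPI under approximation *)

Definition dPI_residual (kappa : R) (f : nat -> R) (n : nat) : R :=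
  f (n - 1)%nat + f n + f (S n) - kappa - INR n / f n.

Lemma dPI_upper_bound (kappa : R) (b : nat -> R) (n : nat) :
  dPI_positive_solution kappa b -> (1 <= n)%nat -> b n <= Rabs kappa + sqrt (INR n).
Proof.
  intros [hb0 [hpos heq]] hn.
  pose proof (hpos n hn) as hb.
  assert (hprev : 0 <= b (n - 1)%nat).
  { destruct (Nat.eq_dec n 1) as [-> | hn1]; [simpl; rewrite hb0; lra|].
    left. apply hpos. lia. }
  pose proof (hpos (S n) ltac:(lia)).
  assert (hn' : INR n = b n * (b (n - 1)%nat + b n + b (S n) - kappa)).
  { rewrite <- (heq n hn). field. lra. }
  pose proof (sqrt_sqrt (INR n) (pos_INR n)). pose proof (sqrt_pos (INR n)).
  pose proof (Rle_abs kappa). pose proof (Rabs_pos kappa).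
  apply Rnot_lt_le. intro hc. nra.
Qed.

Lemma dPI_error_step (kappa D rho : R) (b f : nat -> R) (n : nat) :
  0 < b n -> 0 < f n ->
  INR n / b n = b (n - 1)%nat + b n + b (S n) - kappa ->
  (D - 1) * (b n * f n) <= INR n ->
  Rabs (dPI_residual kappa f n) <= rho ->
  D * Rabs (b n - f n) <=
    Rabs (b (n - 1)%nat - f (n - 1)%nat) + Rabs (b (S n) - f (S n)) + rho.
Proof.
  intros hb hf heq hD hres.
  set (X := INR n / (b n * f n)).
  (* subtracting the residual linearizes the equation: n/b_n - n/f_n = - (b_n - f_n) X *)
  assert (hid : - (b n - f n) * (1 + X) =
    (b (n - 1)%nat - f (n - 1)%nat) + (b (S n) - f (S n)) + dPI_residual kappa f n).
  { unfold dPI_residual, X.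
    replace (- (b n - f n) * (1 + INR n / (b n * f n)))
      with (- (b n - f n) + (INR n / b n - INR n / f n)) by (field; lra).
    rewrite heq. ring. }
  assert (hX : D - 1 <= X) by (apply Rle_div_r; nra).
  assert (hX0 : 0 <= X) by (apply Rdiv_le_0_compat; [apply pos_INR | nra]).
  assert (habs : Rabs (b n - f n) * (1 + X) =
    Rabs ((b (n - 1)%nat - f (n - 1)%nat) + (b (S n) - f (S n)) + dPI_residual kappa f n)).
  { rewrite <- hid, Rabs_mult, Rabs_Ropp, (Rabs_right (1 + X)) by lra. reflexivity. }
  pose proof (Rabs_triang (b (n - 1)%nat - f (n - 1)%nat + (b (S n) - f (S n)))
    (dPI_residual kappa f n)).
  pose proof (Rabs_triang (b (n - 1)%nat - f (n - 1)%nat) (b (S n) - f (S n))).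
  pose proof (Rabs_pos (b n - f n)).
  nra.
Qed.

Lemma dPI_error_le_affine (kappa c0 c1 : R) (b f : nat -> R) (n : nat) :
  dPI_positive_solution kappa b -> (1 <= n)%nat -> 0 < f n -> f n <= c0 + c1 * INR n ->
  Rabs (b n - f n) <= Rabs kappa + 1 + Rabs c0 + (1 + Rabs c1) * INR n.
Proof.
  intros hsol hn hf hfn.
  pose proof (dPI_upper_bound kappa b n hsol hn).
  destruct hsol as [_ [hbpos _]]. pose proof (hbpos n hn).
  pose proof (sqrt_le_1_plus (INR n) (pos_INR n)). pose proof (pos_INR n).
  pose proof (Rle_abs c0).
  assert (c1 * INR n <= Rabs c1 * INR n) by (apply Rmult_le_compat_r; [lra | apply Rle_abs]).
  apply Rabs_le. nra.
Qed.

Theorem dPI_stability (kappa D theta rho c0 c1 : R) (b f : nat -> R) (N0 : nat) :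
  dPI_positive_solution kappa b -> (1 <= N0)%nat ->
  2 < D -> 0 <= theta -> 1 + theta ^ 2 <= D * theta -> 0 <= rho ->
  (forall n, (N0 <= n)%nat -> 0 < f n) ->
  (forall n, (N0 <= n)%nat -> f n <= c0 + c1 * INR n) ->
  (forall n, (N0 <= n)%nat -> (D - 1) * (b n * f n) <= INR n) ->
  (forall n, (N0 <= n)%nat -> Rabs (dPI_residual kappa f n) <= rho) ->
  forall n, (N0 <= n)%nat ->
    Rabs (b n - f n) <=
      rho / (D - 2) + Rabs (b (N0 - 1)%nat - f (N0 - 1)%nat) * theta ^ (n - (N0 - 1)).
Proof.
  intros hsol hN0 hD hth hDth hrho hfpos hfgrowth hbf hres.
  pose proof hsol as [_ [hbpos hbeq]].
  set (B := Rabs (b (N0 - 1)%nat - f (N0 - 1)%nat)).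
  set (y k := Rabs (b (N0 - 1 + k)%nat - f (N0 - 1 + k)%nat)).
  assert (hy : forall k, y k <= rho / (D - 2) + B * theta ^ k).
  { apply (subsolution_le_barrier D theta rho B
      (B + Rabs kappa + 1 + Rabs c0 + (1 + Rabs c1) * INR N0) (1 + Rabs c1));
      try assumption.
    - apply Rabs_pos.
    - unfold y, B. rewrite Nat.add_0_r. lra.
    - intro k. unfold y.
      replace (N0 - 1 + S k)%nat with (N0 + k)%nat by lia.
      replace (N0 - 1 + k)%nat with (N0 + k - 1)%nat by lia.
      replace (N0 - 1 + S (S k))%nat with (S (N0 + k)) by lia.
      apply dPI_error_step with kappa;
        [apply hbpos | apply hfpos | apply hbeq | apply hbf | apply hres]; lia.
    - intro k. unfold y.
      assert (hB : 0 <= B) by apply Rabs_pos.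
      pose proof (Rabs_pos kappa). pose proof (Rabs_pos c0). pose proof (Rabs_pos c1).
      pose proof (pos_INR N0). pose proof (pos_INR k).
      destruct k as [|k].
      + rewrite Nat.add_0_r. fold B. simpl INR. nra.
      + replace (N0 - 1 + S k)%nat with (N0 + k)%nat by lia.
        eapply Rle_trans;
          [apply (dPI_error_le_affine kappa c0 c1);
             [exact hsol | lia | apply hfpos | apply hfgrowth]; lia|].
        rewrite plus_INR, S_INR. nra. }
  intros n hn.
  replace n with (N0 - 1 + (n - (N0 - 1)))%nat at 1 2 by lia.
  apply hy.
Qed.

(** * Leading order *)

Definition dPI_lead (n : nat) : R := sqrt (INR n) / sqrt 3.

Lemma sqrt3_bounds : 1.732 <= sqrt 3 <= 1.7321.
Proof. pose proof (sqrt_sqrt 3 ltac:(lra)). pose proof (sqrt_pos 3). split; nra. Qed.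

Lemma dPI_lead_nonneg (n : nat) : 0 <= dPI_lead n.
Proof.
  apply Rdiv_le_0_compat; [apply sqrt_pos|]. pose proof sqrt3_bounds. lra.
Qed.

Lemma dPI_lead_sq (n : nat) : dPI_lead n * dPI_lead n = INR n / 3.
Proof.
  unfold dPI_lead. pose proof sqrt3_bounds.
  replace (sqrt (INR n) / sqrt 3 * (sqrt (INR n) / sqrt 3))
    with (sqrt (INR n) * sqrt (INR n) / (sqrt 3 * sqrt 3)) by (field; lra).
  rewrite !sqrt_sqrt by (try apply pos_INR; lra). reflexivity.
Qed.

Lemma sqrt_INR_dPI_lead (n : nat) : sqrt (INR n) = sqrt 3 * dPI_lead n.
Proof. unfold dPI_lead. pose proof sqrt3_bounds. field. lra. Qed.

Lemma dPI_lead_le (n : nat) : dPI_lead n <= 1 + INR n.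
Proof.
  pose proof (sqrt_le_1_plus (INR n) (pos_INR n)). pose proof (sqrt_INR_dPI_lead n).
  pose proof (dPI_lead_nonneg n). pose proof sqrt3_bounds. nra.
Qed.

Lemma dPI_lead_ge (c : R) (n : nat) : 3 * (c * c) <= INR n -> c <= dPI_lead n.
Proof.
  intro h. pose proof (dPI_lead_sq n). pose proof (dPI_lead_nonneg n).
  destruct (Rle_or_lt c 0); nra.
Qed.

Lemma dPI_lead_ge_of_le (m n : nat) (c : R) :
  3 * (c * c) <= INR m -> (m <= n)%nat -> c <= dPI_lead n.
Proof. intros hc hmn. apply dPI_lead_ge. apply le_INR in hmn. lra. Qed.

Lemma dPI_lead_pos (n : nat) : (1 <= n)%nat -> 0 < dPI_lead n.
Proof.
  intro hn. enough (1 / 2 <= dPI_lead n) by lra.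
  apply dPI_lead_ge. apply le_INR in hn. simpl in hn. lra.
Qed.

Lemma dPI_lead_succ_sq (n : nat) :
  dPI_lead (S n) * dPI_lead (S n) = dPI_lead n * dPI_lead n + 1 / 3.
Proof. rewrite !dPI_lead_sq, S_INR. field. Qed.

Lemma dPI_lead_pred_sq (n : nat) : (1 <= n)%nat ->
  dPI_lead n * dPI_lead n = dPI_lead (n - 1) * dPI_lead (n - 1) + 1 / 3.
Proof. intro hn. rewrite <- dPI_lead_succ_sq. f_equal; f_equal; lia. Qed.

Lemma dPI_lead_unbounded (M : R) :
  exists N : nat, forall n : nat, (N <= n)%nat -> M <= dPI_lead n.
Proof.
  destruct (INR_archimed 1 (3 * (M * M)) ltac:(lra)) as [N hN].
  exists N. intros n hn. apply dPI_lead_ge.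
  pose proof (le_INR _ _ hn). lra.
Qed.

Lemma dPI_lead_residual (kappa : R) (n : nat) :
  (1 <= n)%nat -> Rabs (dPI_residual kappa dPI_lead n) <= Rabs kappa + 1.
Proof.
  intro hn. unfold dPI_residual.
  pose proof (dPI_lead_pos n hn).
  assert (hdiv : INR n / dPI_lead n = 3 * dPI_lead n).
  { apply Rmult_eq_reg_r with (dPI_lead n); [|lra].
    unfold Rdiv. rewrite Rmult_assoc, Rinv_l by lra.
    pose proof (dPI_lead_sq n). lra. }
  rewrite hdiv.
  pose proof (sub_bounds_of_sq_add_third _ _ (dPI_lead_nonneg _) (dPI_lead_nonneg _)
    (dPI_lead_succ_sq n)).
  pose proof (sub_bounds_of_sq_add_third _ _ (dPI_lead_nonneg _) (dPI_lead_nonneg _)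
    (dPI_lead_pred_sq n hn)).
  pose proof (Rle_abs kappa). pose proof (Rle_abs (- kappa)). rewrite Rabs_Ropp in *.
  apply Rabs_le. lra.
Qed.

Lemma dPI_lead_error_bounded (kappa : R) (b : nat -> R) :
  dPI_positive_solution kappa b ->
  exists (N0 : nat) (K : R), forall n, (N0 <= n)%nat -> Rabs (b n - dPI_lead n) <= K.
Proof.
  intro hsol.
  destruct (dPI_lead_unbounded (4 * Rabs kappa)) as [N hN].
  set (N0 := Nat.max 1 N).
  set (B := Rabs (b (N0 - 1)%nat - dPI_lead (N0 - 1)%nat)).
  exists N0, (2 * (Rabs kappa + 1) + B). intros n hn.
  pose proof (pow_le_one (1 / 2) (n - (N0 - 1)) ltac:(lra)).
  assert (hB : 0 <= B) by apply Rabs_pos.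
  pose proof (dPI_stability kappa (5 / 2) (1 / 2) (Rabs kappa + 1) 1 1 b dPI_lead N0 hsol)
    as hstab.
  replace ((Rabs kappa + 1) / (5 / 2 - 2)) with (2 * (Rabs kappa + 1)) in hstab by field.
  fold B in hstab.
  enough (Rabs (b n - dPI_lead n) <= 2 * (Rabs kappa + 1) + B * (1 / 2) ^ (n - (N0 - 1)))
    by nra.
  apply hstab; try lra; try lia.
  - pose proof (Rabs_pos kappa). lra.
  - intros k hk. apply dPI_lead_pos. lia.
  - intros k hk. pose proof (dPI_lead_le k). lra.
  - intros k hk.
    pose proof (hN k ltac:(lia)) as hv.
    pose proof (dPI_upper_bound kappa b k hsol ltac:(lia)) as hb.
    rewrite sqrt_INR_dPI_lead in hb.
    pose proof (dPI_lead_sq k). pose proof (dPI_lead_nonneg k). pose proof sqrt3_bounds.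
    assert (b k * dPI_lead k <= (Rabs kappa + 1.7321 * dPI_lead k) * dPI_lead k)
      by (apply Rmult_le_compat_r; nra).
    nra.
  - intros k hk. apply dPI_lead_residual. lia.
Qed.

Theorem dPI_asymptotic (kappa : R) (b : nat -> R) :
  dPI_positive_solution kappa b ->
  forall cm cp : R, cm < 1 -> 1 < cp ->
    exists N : nat, forall n : nat, (N <= n)%nat ->
      cm * dPI_lead n <= b n /\ b n <= cp * dPI_lead n.
Proof.
  intros hsol cm cp hcm hcp.
  destruct (dPI_lead_error_bounded kappa b hsol) as [N0 [K hK]].
  exact (eventually_within_ratio b dPI_lead N0 K cm cp hcm hcp hK dPI_lead_unbounded).
Qed.

(** * Second order for kappa = 4 *)

Definition dPI4_approx (v : R) : R := v + 2 / 3 + (2 / 9) / v.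

Lemma dPI4_approx_bounds (v : R) : 1 <= v -> v < dPI4_approx v <= v + 1.
Proof.
  intro hv. unfold dPI4_approx.
  assert (0 < (2 / 9) / v) by (apply Rdiv_lt_0_compat; lra).
  assert ((2 / 9) / v <= 2 / 9) by (apply Rle_div_l; lra).
  lra.
Qed.

Lemma dPI4_approx_residual (u v w : R) :
  24 <= v -> 0 <= u -> 0 <= w -> u * u = v * v - 1 / 3 -> w * w = v * v + 1 / 3 ->
  Rabs (dPI4_approx u + dPI4_approx v + dPI4_approx w - 4 - 3 * (v * v) / dPI4_approx v)
    <= 2 / 100000.
Proof.
  intros hv hu0 hw0 hu hw.
  assert (hu1 : 23.99 <= u) by nra.
  assert (hw1 : 24 <= w) by nra.
  set (a := v - u). set (c := w - v).
  assert (ha : 0 <= a <= 7 / 1000) by (unfold a; split; nra).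
  assert (hc : 0 <= c <= 7 / 1000) by (unfold c; split; nra).
  assert (hid :
    dPI4_approx u + dPI4_approx v + dPI4_approx w - 4 - 3 * (v * v) / dPI4_approx v =
    (c - a) + 2 / 9 * (a / (v * u) - c / (v * w))
      + 12 / (9 * v * (9 * (v * v) + 6 * v + 2))).
  { unfold dPI4_approx, a, c. field. repeat split; nra. }
  rewrite hid. clear hid.
  (* from (v - a)^2 = v^2 - 1/3 and (v + c)^2 = v^2 + 1/3; so c - a = O(v^-3) *)
  assert (hca : 2 * v * (c - a) = - (a * a + c * c)) by (unfold a, c; nra).
  assert (h1 : - 3 / 1000000 <= c - a <= 0) by nra.
  assert (h2 : 0 <= a / (v * u) <= 13 / 1000000).
  { split; [apply Rdiv_le_0_compat; nra|]. apply Rle_div_l; nra. }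
  assert (h3 : 0 <= c / (v * w) <= 13 / 1000000).
  { split; [apply Rdiv_le_0_compat; nra|]. apply Rle_div_l; nra. }
  assert (h4 : 0 <= 12 / (9 * v * (9 * (v * v) + 6 * v + 2)) <= 11 / 1000000).
  { split; [apply Rdiv_le_0_compat; nra|]. apply Rle_div_l; nra. }
  apply Rabs_le. lra.
Qed.

Lemma dPI4_residual_eq (n : nat) : (1 <= n)%nat ->
  dPI_residual 4 (fun k => dPI4_approx (dPI_lead k)) n =
  dPI4_approx (dPI_lead (n - 1)) + dPI4_approx (dPI_lead n) + dPI4_approx (dPI_lead (S n))
    - 4 - 3 * (dPI_lead n * dPI_lead n) / dPI4_approx (dPI_lead n).
Proof. intro hn. unfold dPI_residual. rewrite dPI_lead_sq. f_equal. f_equal. field. Qed.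

Lemma dPI4_product_le (b : nat -> R) (n : nat) :
  dPI_positive_solution 4 b -> (1728 <= n)%nat ->
  (5 / 2 - 1) * (b n * dPI4_approx (dPI_lead n)) <= INR n.
Proof.
  intros hsol hn.
  pose proof (dPI_lead_ge_of_le 1728 n 24 ltac:(rewrite INR_IZR_INZ; simpl Z.of_nat; lra) hn).
  pose proof (dPI4_approx_bounds (dPI_lead n) ltac:(lra)).
  pose proof (dPI_upper_bound 4 b n hsol ltac:(lia)) as hb.
  pose proof sqrt3_bounds. pose proof (dPI_lead_sq n).
  rewrite sqrt_INR_dPI_lead, Rabs_right in hb by lra.
  destruct hsol as [_ [hbpos _]]. pose proof (hbpos n ltac:(lia)).
  assert (b n * dPI4_approx (dPI_lead n) <= (4 + 1.7321 * dPI_lead n) * (dPI_lead n + 1))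
    by (apply Rmult_le_compat; nra).
  nra.
Qed.

Lemma dPI4_error_at_1727 (b : nat -> R) :
  dPI_positive_solution 4 b -> Rabs (b 1727%nat - dPI4_approx (dPI_lead 1727)) <= 100.
Proof.
  intro hsol.
  pose proof (dPI_lead_sq 1727) as hsq. rewrite INR_IZR_INZ in hsq. simpl Z.of_nat in hsq.
  pose proof (dPI_lead_nonneg 1727). pose proof sqrt3_bounds.
  assert (1 <= dPI_lead 1727 <= 24) by nra.
  pose proof (dPI4_approx_bounds (dPI_lead 1727) ltac:(lra)).
  pose proof (dPI_upper_bound 4 b 1727 hsol ltac:(lia)) as hb.
  rewrite sqrt_INR_dPI_lead, Rabs_right in hb by lra.
  destruct hsol as [_ [hbpos _]]. pose proof (hbpos 1727%nat ltac:(lia)).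
  apply Rabs_le. nra.
Qed.

Lemma dPI4_error_le (b : nat -> R) (n : nat) :
  dPI_positive_solution 4 b -> (2187 <= n)%nat ->
  Rabs (b n - dPI4_approx (dPI_lead n)) <= 5 / 100000.
Proof.
  intros hsol hn.
  assert (hlead : forall k, (1728 <= k)%nat -> 24 <= dPI_lead k)
    by (intros k; apply dPI_lead_ge_of_le; rewrite INR_IZR_INZ; simpl Z.of_nat; lra).
  assert (htail : (1 / 2) ^ (n - 1727) <= (1 / 2) ^ 30).
  { replace (n - 1727)%nat with (30 + (n - 1757))%nat by lia. rewrite pow_add.
    pose proof (pow_le_one (1 / 2) (n - 1757) ltac:(lra)).
    pose proof (pow_le (1 / 2) 30 ltac:(lra)). nra. }
  pose proof (pow_le (1 / 2) (n - 1727) ltac:(lra)).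
  pose proof (dPI4_error_at_1727 b hsol).
  pose proof (Rabs_pos (b 1727%nat - dPI4_approx (dPI_lead 1727))).
  assert (Rabs (b 1727%nat - dPI4_approx (dPI_lead 1727)) * (1 / 2) ^ (n - 1727)
    <= 100 * (1 / 2) ^ 30) by (apply Rmult_le_compat; lra).
  eapply Rle_trans;
    [apply (dPI_stability 4 (5 / 2) (1 / 2) (2 / 100000) 2 1 b
      (fun k => dPI4_approx (dPI_lead k)) 1728 hsol); try lra; try lia|simpl in *; lra].
  - intros k hk. pose proof (hlead k hk).
    pose proof (dPI4_approx_bounds (dPI_lead k) ltac:(lra)). lra.
  - intros k hk. pose proof (hlead k hk). pose proof (dPI_lead_le k).
    pose proof (dPI4_approx_bounds (dPI_lead k) ltac:(lra)). lra.
  - intros k hk. apply dPI4_product_le; assumption.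
  - intros k hk. rewrite dPI4_residual_eq by lia.
    apply dPI4_approx_residual;
      [apply hlead; lia | apply dPI_lead_nonneg | apply dPI_lead_nonneg | |
       apply dPI_lead_succ_sq].
    pose proof (dPI_lead_pred_sq k ltac:(lia)). lra.
Qed.

Theorem dPI4_explicit (b : nat -> R) :
  dPI_positive_solution 4 b ->
  forall n : nat, (2187 <= n)%nat ->
    (987 / 1000) * dPI_lead n <= b n /\ b n <= (1025 / 1000) * dPI_lead n.
Proof.
  intros hsol n hn.
  pose proof (dPI4_error_le b n hsol hn) as herr.
  pose proof (dPI_lead_ge_of_le 2187 n 27 ltac:(rewrite INR_IZR_INZ; simpl Z.of_nat; lra) hn).
  apply Rabs_le_between' in herr. unfold dPI4_approx in herr.
  assert (0 < (2 / 9) / dPI_lead n) by (apply Rdiv_lt_0_compat; lra).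
  assert ((2 / 9) / dPI_lead n <= 2 / 243) by (apply Rle_div_l; lra).
  split; lra.
Qed.

Theorem mainTheorem10 (kappa : R) (b : nat -> R) :
  dPI_positive_solution kappa b ->
  (forall cm cp : R, cm < 1 -> 1 < cp ->
     exists N : nat, forall n : nat, (N <= n)%nat ->
       cm * (sqrt (INR n) / sqrt 3) <= b n /\
       b n <= cp * (sqrt (INR n) / sqrt 3)) /\
  (kappa = 4 ->
     forall n : nat, (2187 <= n)%nat ->
       (987 / 1000) * (sqrt (INR n) / sqrt 3) <= b n /\
       b n <= (1025 / 1000) * (sqrt (INR n) / sqrt 3)).
Proof.
  intro hsol. split.
  - exact (dPI_asymptotic kappa b hsol).
  - intros ->. exact (dPI4_explicit b hsol).
Qed.
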